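(* If $L\subseteq\Sigma^\omega$ is LPBA-recognizable, then there are finitely many Parikh-recognizable languages $U_1,\dots,U_n\subseteq\Sigma^*$ and regular languages $V_1,\dots,V_n\subseteq\Sigma^*$ with $L=\bigcup_{i=1}^nU_iV_i^\omega$.
   Context: For $V\subseteq\Sigma^*$, $V^\omega=\{w_1w_2\cdots\mid w_i\in V\setminus\{\varepsilon\}\}$. A semi-linear set in $\mathbb{N}^d$ (resp. $(\mathbb{N}\cup\{\infty\})^d$) is a finite union of sets $\{b_0+\sum_{j=1}^\ell b_jz_j\mid z_j\in\mathbb{N}\}$ with $b_j\in\mathbb{N}^d$ (resp. $(\mathbb{N}\cup\{\infty\})^d$), with arithmetic $z+\infty=\infty+z=\infty+\infty=\infty$, $z\cdot\infty=\infty\cdot z=\infty$ for $z>0$, $0\cdot\infty=\infty\cdot0=0$. A Parikh automaton (PA) of dimension $d$ is $(Q,\Sigma,q_0,\Delta,F,C)$ with finite $Q$, $q_0\in Q$, $F\subseteq Q$, finite $\Delta\subseteq Q\times\Sigma\times\mathbb{N}^d\times Q$, semi-linear $C\subseteq\mathbb{N}^d$; it accepts a finite word $x_1\cdots x_n$ if there is a run $r_i=(p_{i-1},x_i,\mathbf{v}_i,p_i)\in\Delta$, $p_0=q_0$, with $p_n\in F$ and $\sum_i\mathbf{v}_i\in C$; Parikh-recognizable languages are those accepted by PA. A limit Parikh–Büchi automaton (LPBA) is such a tuple but with $C\subseteq(\mathbb{N}\cup\{\infty\})^d$ semi-linear; a run $r_1r_2\cdots$ on an infinite word ($r_i=(p_{i-1},\alpha_i,\mathbf{v}_i,p_i)$,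 $p_0=q_0$) is accepting if $p_i\in F$ for infinitely many $i$ and $\rho(r)\in C$, where the $j$-th component of $\rho(r)$ is $\infty$ if infinitely many $\mathbf{v}_i$ have nonzero $j$-th component and otherwise is the finite sum of the $j$-th components. $L$ is LPBA-recognizable if it is the set of infinite words with an accepting run of some LPBA. *)

From Stdlib Require List.
From mathcomp Require Import all_boot.
Set Implicit Arguments. Unset Strict Implicit. Unset Printing Implicit Defensive.

Definition nvec (d : nat) := 'I_d -> nat.

Definition in_linear (d : nat) (b0 : nvec d) (ps : seq (nvec d)) (v : nvec d) : Prop :=
  exists zs : seq nat, size zs = size ps /\
    forall j : 'I_d, v j = b0 j + \sum_(k < size ps) nth (fun _ => 0) ps k j * nth 0 zs k.

Definition semilinear (d : nat) (C : nvec d -> Prop) : Prop :=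
  exists S : seq (nvec d * seq (nvec d)),
    forall v, C v <-> exists2 p, List.In p S & in_linear p.1 p.2 v.

Inductive enat := Fin of nat | Inf.

Definition eadd (x y : enat) : enat :=
  match x, y with Fin a, Fin b => Fin (a + b) | _, _ => Inf end.
Definition emul (x y : enat) : enat :=
  match x, y with
  | Fin a, Fin b => Fin (a * b)
  | Fin 0, Inf | Inf, Fin 0 => Fin 0
  | _, _ => Inf
  end.

Definition evec (d : nat) := 'I_d -> enat.

Definition in_linear_ext (d : nat) (b0 : evec d) (ps : seq (evec d)) (v : evec d) : Prop :=
  exists zs : seq nat, size zs = size ps /\
    forall j : 'I_d, v j = eadd (b0 j)
      (\big[eadd/Fin 0]_(k < size ps) emul (nth (fun _ => Fin 0) ps k j) (Fin (nth 0 zs k))).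

Definition semilinear_ext (d : nat) (C : evec d -> Prop) : Prop :=
  exists S : seq (evec d * seq (evec d)),
    forall v, C v <-> exists2 p, List.In p S & in_linear_ext p.1 p.2 v.

Definition lang (Sigma : Type) := seq Sigma -> Prop.
Definition olang (Sigma : Type) := (nat -> Sigma) -> Prop.

Definition trans (Q Sigma : Type) (d : nat) := (Q * Sigma * {ffun 'I_d -> nat} * Q)%type.
Definition tsrc  (Q Sigma : Type) d (t : trans Q Sigma d) : Q := t.1.1.1.
Definition tlab  (Q Sigma : Type) d (t : trans Q Sigma d) : Sigma := t.1.1.2.
Definition tvec  (Q Sigma : Type) d (t : trans Q Sigma d) : {ffun 'I_d -> nat} := t.1.2.
Definition ttgt  (Q Sigma : Type) d (t : trans Q Sigma d) : Q := t.2.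

Fixpoint fin_run (Q Sigma : Type) d (Delta : seq (trans Q Sigma d))
    (q : Q) (w : seq Sigma) (r : seq (trans Q Sigma d)) (p : Q) : Prop :=
  match w, r with
  | [::], [::] => p = q
  | a :: w', t :: r' =>
      List.In t Delta /\ tsrc t = q /\ tlab t = a /\ fin_run Delta (ttgt t) w' r' p
  | _, _ => False
  end.

Definition PA_accepts (Q : finType) (Sigma : Type) d (q0 : Q)
    (Delta : seq (trans Q Sigma d)) (F : pred Q) (C : nvec d -> Prop) (w : seq Sigma) : Prop :=
  exists (r : seq (trans Q Sigma d)) (p : Q),
    fin_run Delta q0 w r p /\ p \in F /\ C (fun j => \sum_(t <- r) tvec t j).

Definition parikh_recognizable (Sigma : finType) (U : lang Sigma) : Prop :=
  exists (Q : finType) (d : nat) (q0 : Q) (Delta : seq (trans Q Sigma d))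
         (F : pred Q) (C : nvec d -> Prop),
    semilinear C /\ forall w, U w <-> PA_accepts q0 Delta F C w.

Fixpoint nfa_run (Q Sigma : Type) (delta : Q -> Sigma -> Q -> bool)
    (q : Q) (w : seq Sigma) (F : pred Q) : Prop :=
  match w with
  | [::] => F q
  | a :: w' => exists q', delta q a q' /\ nfa_run delta q' w' F
  end.

Definition regular (Sigma : finType) (V : lang Sigma) : Prop :=
  exists (Q : finType) (q0 : Q) (delta : Q -> Sigma -> Q -> bool) (F : pred Q),
    forall w, V w <-> nfa_run delta q0 w F.

Definition infinitely_often (P : nat -> Prop) : Prop := forall N, exists i, N <= i /\ P i.

Definition rho_is (Q Sigma : Type) d (r : nat -> trans Q Sigma d) (v : evec d) : Prop :=
  forall j : 'I_d,
    (infinitely_often (fun i => tvec (r i) j <> 0) -> v j = Inf) /\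
    (~ infinitely_often (fun i => tvec (r i) j <> 0) ->
       exists N, (forall i, N <= i -> tvec (r i) j = 0) /\
                 v j = Fin (\sum_(i < N) tvec (r i) j)).

Definition LPBA_accepts (Q : finType) (Sigma : Type) d (q0 : Q)
    (Delta : seq (trans Q Sigma d)) (F : pred Q) (C : evec d -> Prop) (a : nat -> Sigma) : Prop :=
  exists r : nat -> trans Q Sigma d,
    tsrc (r 0) = q0 /\
    (forall i, List.In (r i) Delta /\ tlab (r i) = a i /\ ttgt (r i) = tsrc (r i.+1)) /\
    infinitely_often (fun i => ttgt (r i) \in F) /\
    (exists v, rho_is r v /\ C v).

Definition LPBA_recognizable (Sigma : finType) (L : olang Sigma) : Prop :=
  exists (Q : finType) (d : nat) (q0 : Q) (Delta : seq (trans Q Sigma d))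
         (F : pred Q) (C : evec d -> Prop),
    semilinear_ext C /\ forall a, L a <-> LPBA_accepts q0 Delta F C a.

(* V^omega = { w1 w2 ... | w_i in V \ {eps} } *)
Definition omega_power (Sigma : Type) (V : lang Sigma) : olang Sigma :=
  fun a => exists ws : nat -> seq Sigma,
    (forall k, V (ws k) /\ ws k <> [::]) /\
    forall k j, j < size (ws k) ->
      a (\sum_(i < k) size (ws i) + j) = nth (a 0) (ws k) j.

Definition concat_omega (Sigma : Type) (U : lang Sigma) (W : olang Sigma) : olang Sigma :=
  fun a => exists2 u, U u & exists2 b, W b &
    forall i, a i = if i < size u then nth (a 0) u i else b (i - size u).

From Stdlib Require Import List Classical ClassicalEpsilon FunctionalExtensionality.
From mathcomp Require Import all_boot zify.
Set Implicit Arguments. Unset Strict Implicit. Unset Printing Implicit Defensive.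

(* Let r be an accepting run of the LPBA, v = rho(r) in C, and J the set of
   coordinates where v is infinite.  From some position M on, the run adds
   nothing outside J, and some state q is the source of infinitely many
   transitions.  Cut the run at a visit of q after M, and then repeatedly at a
   later visit of q chosen so that every block meets an accepting state and is
   nonzero in every coordinate of J.  The prefix lies in the language of runs
   from q0 to q whose counter vector x satisfies C (ext J x): this is Parikh
   recognizable because {x | C (ext J x)} is semilinear.  Each block lies in the
   regular language of loops at q that vanish outside J, visit F and are nonzero
   in all of J.  Conversely, gluing such runs yields an accepting run, and we
   take the union over the finitely many pairs (q, J). *)

(** * Semilinear sets and infinite coordinates *)

Definition isInf (x : enat) : bool := if x is Inf then true else false.
Definition efin (x : enat) : nat := if x is Fin n then n else 0.

Lemma big_eadd (I : finType) (F : I -> enat) :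
  \big[eadd/Fin 0]_i F i =
  if [exists i, isInf (F i)] then Inf else Fin (\sum_i efin (F i)).
Proof.
have -> : [exists i, isInf (F i)] = \big[orb/false]_i isInf (F i) by rewrite big_orE.
apply: (big_rec3 (fun x b n => x = if b then Inf else Fin n)) => // i x b n _ ->.
by case: (F i) => [m|]; case: b.
Qed.

Lemma eadd_big_emul (I : finType) (b : enat) (g : I -> enat) (z : I -> nat) :
  eadd b (\big[eadd/Fin 0]_i emul (g i) (Fin (z i))) =
  if isInf b || [exists i, (0 < z i) && isInf (g i)] then Inf
  else Fin (efin b + \sum_i efin (g i) * z i).
Proof.
have isInf_emul i : isInf (emul (g i) (Fin (z i))) = (0 < z i) && isInf (g i).
  by case: (g i) => [[|a]|]; case: (z i).
have efin_emul i : efin (emul (g i) (Fin (z i))) = efin (g i) * z i.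
  by case: (g i) => [[|a]|]; case: (z i) => [|n] //=; rewrite muln0.
rewrite big_eadd (eq_existsb isInf_emul) (eq_bigr _ (fun i _ => efin_emul i)).
by case: b => [a|]; case: ifP.
Qed.

Definition ext d (J : {set 'I_d}) (x : nvec d) : evec d :=
  fun j => if j \in J then Inf else Fin (x j).

Lemma In_mem (T : eqType) (x : T) (s : seq T) : In x s <-> x \in s.
Proof.
elim: s => [|y s IH] //=; rewrite in_cons; split.
  by case=> [->|/IH ->]; rewrite ?eqxx ?orbT.
by case/orP => [/eqP ->|/IH]; [left|right].
Qed.

Section Semilinear.

Variable d : nat.
Implicit Types (P : nvec d -> Prop) (J : {set 'I_d}).

Lemma semilinear_eq P P' : (forall x, P x <-> P' x) -> semilinear P -> semilinear P'.
Proof. by move=> eqP' [S HS]; exists S => x; rewrite -eqP'. Qed.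

Lemma semilinear0 : semilinear (fun _ : nvec d => False).
Proof. by exists [::] => x; split=> // -[]. Qed.

Lemma semilinear_comb (I : finType) (b : nvec d) (g : I -> nvec d) :
  semilinear (fun x => exists z : I -> nat, forall j, x j = b j + \sum_i g i j * z i).
Proof.
have sum_codom (zs : seq nat) j :
    \sum_(k < size (codom g)) nth (fun _ => 0) (codom g) k j * nth 0 zs k =
    \sum_i g i j * nth 0 zs (enum_rank i).
  rewrite -(big_mkord xpredT (fun k => nth (fun _ => 0) (codom g) k j * nth 0 zs k)).
  rewrite size_codom big_mkord [RHS]big_enum_val.
  by apply: eq_bigr => k _; rewrite nth_codom enum_valK.
exists [:: (b, codom g)] => x; split.
- case=> z Hz; exists (b, codom g); first by left.
  exists (codom z); split; first by rewrite !size_codom.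
  move=> j; rewrite Hz sum_codom; congr (_ + _).
  by apply: eq_bigr => i _; rewrite nth_codom enum_rankK.
- case=> _ [<-|[]] [zs [_ Hzs]].
  by exists (fun i => nth 0 zs (enum_rank i)) => j; rewrite Hzs sum_codom.
Qed.

Lemma semilinear_bigcup (T : Type) (s : seq T) (P : T -> nvec d -> Prop) :
  (forall p, In p s -> semilinear (P p)) ->
  semilinear (fun x => exists2 p, In p s & P p x).
Proof.
elim: s => [_|p s IH slP] /=.
  by apply: semilinear_eq semilinear0 => x; split=> // -[].
have [Sp HSp] := slP p (or_introl erefl).
have [Ss HSs] := IH (fun p' sp' => slP p' (or_intror sp')).
exists (Sp ++ Ss) => x; split.
- case=> p' [<-|sp'] Px.
    by have [q Sq Lq] := (HSp x).1 Px; exists q => //; apply/in_app_iff; left.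
  have [q Sq Lq] := (HSs x).1 (ex_intro2 _ _ p' sp' Px).
  by exists q => //; apply/in_app_iff; right.
- case=> q /in_app_iff [Sq|Sq] Lq.
    by exists p; [left | apply/HSp; exists q].
  have [p' sp' Px] := (HSs x).2 (ex_intro2 _ _ q Sq Lq).
  by exists p' => //; right.
Qed.

Lemma semilinear_exists (I : finType) (P : I -> nvec d -> Prop) :
  (forall i, semilinear (P i)) -> semilinear (fun x => exists i, P i x).
Proof.
move=> slP; apply: semilinear_eq (semilinear_bigcup (s := enum I) (fun i _ => slP i)) => x.
by split=> [[i _ Pi] | [i Pi]]; [exists i | exists i; rewrite ?In_mem ?mem_enum].
Qed.

Lemma semilinear_cylinder (I : finType) J (b : nvec d) (g : I -> nvec d) :
  semilinear (fun x => exists z : I -> nat,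
    forall j, j \notin J -> x j = b j + \sum_i g i j * z i).
Proof.
pose b' j := if j \in J then 0 else b j.
pose g' (i : I + 'I_d) j :=
  match i with inl i => if j \in J then 0 else g i j | inr k => (j \in J) && (j == k) : nat end.
have sum_g' (z : I + 'I_d -> nat) j : \sum_i g' i j * z i =
    (if j \in J then 0 else \sum_i g i j * z (inl i)) + (if j \in J then z (inr j) else 0).
  rewrite big_sumType /=; congr (_ + _).
    by case: ifP => _; [rewrite big1 | apply: eq_bigr].
  rewrite (bigD1 j) //= eqxx andbT big1 ?addn0; first by case: (j \in J); rewrite ?mul1n.
  by move=> k /negbTE kj; rewrite eq_sym kj andbF.
apply: semilinear_eq (semilinear_comb b' g') => x; split.
- case=> z Hz; exists (z \o inl) => j /negbTE jJ.
  by rewrite Hz sum_g' /b' jJ addn0.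
- case=> z Hz; exists (fun i => match i with inl i => z i | inr k => x k end) => j.
  by rewrite sum_g' /b'; case: ifP => [_|/negbT /Hz ->]; rewrite ?addn0.
Qed.

Lemma in_linear_extE (b : evec d) (ps : seq (evec d)) v :
  in_linear_ext b ps v <-> exists z : 'I_(size ps) -> nat,
    forall j, v j = eadd (b j)
      (\big[eadd/Fin 0]_(k < size ps) emul (nth (fun _ => Fin 0) ps k j) (Fin (z k))).
Proof.
split=> [[zs [_ Hzs]] | [z Hz]]; first by exists (fun k => nth 0 zs k).
exists (map z (enum 'I_(size ps))); split; first by rewrite size_map size_enum_ord.
move=> j; rewrite Hz; congr (eadd _ _); apply: eq_bigr => k _.
by rewrite (nth_map k) ?size_enum_ord // nth_ord_enum.
Qed.

Section MaskedCombination.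

Variables (I : finType) (b : evec d) (g : I -> evec d).
Implicit Types (K : {set I}) (z : I -> nat).

Definition masked_inf K : {set 'I_d} :=
  [set j | isInf (b j) || [exists i in K, isInf (g i j)]].

Definition masked_base K : nvec d := fun j => efin (b j) + \sum_(i in K) efin (g i j).

Definition masked_gen K (i : I) : nvec d := fun j => (i \in K) * efin (g i j).

Lemma eadd_big_emul_masked K z j :
  eadd (b j) (\big[eadd/Fin 0]_i emul (g i j) (Fin ((i \in K) * (z i).+1))) =
  if j \in masked_inf K then Inf
  else Fin (masked_base K j + \sum_i masked_gen K i j * z i).
Proof.
rewrite eadd_big_emul inE; congr (if _ || _ then _ else Fin _).
  by apply: eq_existsb => i; case: (i \in K).
rewrite /masked_base -addnA; congr (_ + _).
rewrite [\sum_(i in K) _]big_mkcond -big_split /=; apply: eq_bigr => i _.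
by rewrite /masked_gen; case: (i \in K); rewrite ?mul0n ?mul1n ?muln0 ?mulnS.
Qed.

(* Fixing the set K of generators used with a positive coefficient determines
   the infinite coordinates, and the finite ones then range over a linear set. *)
Lemma ext_comb_masked J x :
  (exists z, forall j, ext J x j = eadd (b j) (\big[eadd/Fin 0]_i emul (g i j) (Fin (z i)))) <->
  exists K, masked_inf K = J /\ exists z,
    forall j, j \notin J -> x j = masked_base K j + \sum_i masked_gen K i j * z i.
Proof.
split=> [[z Hz] | [K [<- [z Hz]]]]; last first.
  exists (fun i => (i \in K) * (z i).+1) => j.
  by rewrite eadd_big_emul_masked /ext; case: ifP => // /negbT /Hz ->.
pose K := [set i | 0 < z i].
have {}Hz j : ext J x j = if j \in masked_inf K then Inf
    else Fin (masked_base K j + \sum_i masked_gen K i j * (z i).-1).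
  rewrite Hz -eadd_big_emul_masked; congr (eadd _ _); apply: eq_bigr => i _.
  by rewrite /K inE; case: (z i) => [|n]; rewrite ?mul0n ?mul1n.
exists K; split; first by apply/setP => j; have := Hz j; rewrite /ext; do 2!case: (_ \in _).
exists (fun i => (z i).-1) => j jJ.
by have := Hz j; rewrite /ext (negbTE jJ); case: ifP => // _ [].
Qed.

Lemma semilinear_ext_comb J :
  semilinear (fun x => exists z : I -> nat,
    forall j, ext J x j = eadd (b j) (\big[eadd/Fin 0]_i emul (g i j) (Fin (z i)))).
Proof.
pose piece K x := masked_inf K = J /\ exists z : I -> nat,
  forall j, j \notin J -> x j = masked_base K j + \sum_i masked_gen K i j * z i.
apply: (semilinear_eq (P := fun x => exists K, piece K x)) => [x | ].
  by rewrite ext_comb_masked.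
apply: (semilinear_exists (P := piece)) => K; rewrite /piece.
case: (eqVneq (masked_inf K) J) => [-> | neqJ].
  apply: semilinear_eq (semilinear_cylinder J (masked_base K) (masked_gen K)) => x.
  by split=> [|[]].
apply: semilinear_eq semilinear0 => x; split=> [[] | [infKJ _]].
by rewrite infKJ eqxx in neqJ.
Qed.

End MaskedCombination.

Lemma semilinear_ext_proj (C : evec d -> Prop) J :
  semilinear_ext C -> semilinear (fun x => C (ext J x)).
Proof.
case=> S HS.
have slS p : In p S -> semilinear (fun x => in_linear_ext p.1 p.2 (ext J x)).
  move=> _; pose g (k : 'I_(size p.2)) := nth (fun _ => Fin 0) p.2 k.
  by apply: semilinear_eq (semilinear_ext_comb p.1 g J) => x; rewrite in_linear_extE.
by apply: semilinear_eq (semilinear_bigcup slS) => x; rewrite HS.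
Qed.

End Semilinear.

(** * Infinite words *)

Section Words.

Variable T : Type.

Definition segment (f : nat -> T) (m n : nat) : seq T := map f (iota m (n - m)).

Lemma size_segment f m n : size (segment f m n) = n - m.
Proof. by rewrite size_map size_iota. Qed.

Lemma nth_segment x0 f m n i : i < n - m -> nth x0 (segment f m n) i = f (m + i).
Proof. by move=> ltin; rewrite (nth_map 0) ?size_iota // nth_iota. Qed.

Lemma has_segment (P : pred T) f m n k : m <= k < n -> P (f k) -> has P (segment f m n).
Proof.
case/andP=> lemk ltkn Pk; rewrite has_map; apply/hasP; exists k => //.
by rewrite mem_iota lemk subnKC // (leq_trans lemk (ltnW ltkn)).
Qed.

Variables (s0 : seq T) (s : nat -> seq T).

Definition cat_upto n := s0 ++ flatten [seq s k | k <- iota 0 n].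

Lemma cat_uptoS n : cat_upto n.+1 = cat_upto n ++ s n.
Proof. by rewrite /cat_upto -addn1 iotaD map_cat flatten_cat /= cats0 catA. Qed.

Lemma size_cat_upto n : size (cat_upto n) = size s0 + \sum_(k < n) size (s k).
Proof.
elim: n => [|n IH]; first by rewrite /cat_upto cats0 big_ord0 addn0.
by rewrite cat_uptoS size_cat IH big_ord_recr addnA.
Qed.

Lemma cat_upto_prefix n m : n <= m -> exists X, cat_upto m = cat_upto n ++ X.
Proof.
move/subnKC <-; elim: (m - n) => [|k [X EX]]; first by exists [::]; rewrite addn0 cats0.
by exists (X ++ s (n + k)); rewrite addnS cat_uptoS EX catA.
Qed.

Hypothesis size_s_gt0 : forall k, 0 < size (s k).

Lemma leq_size_cat_upto n : n + size s0 <= size (cat_upto n).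
Proof.
rewrite size_cat_upto addnC leq_add2l -[n in n <= _]card_ord -sum1_card.
exact: leq_sum.
Qed.

Definition ocat (x0 : T) (i : nat) : T := nth x0 (cat_upto i.+1) i.

Lemma ocatE x0 n i : i < size (cat_upto n) -> ocat x0 i = nth x0 (cat_upto n) i.
Proof.
move=> ltin; have [X EX] := cat_upto_prefix (leq_maxl n i.+1).
have [Y EY] := cat_upto_prefix (leq_maxr n i.+1).
have ltii : i < size (cat_upto i.+1) by apply: leq_trans (leq_size_cat_upto _); rewrite leq_addr.
rewrite /ocat (_ : nth x0 (cat_upto i.+1) i = nth x0 (cat_upto (maxn n i.+1)) i).
  by rewrite EX nth_cat ltin.
by rewrite EY nth_cat ltii.
Qed.

Lemma ocat_block x0 n j :
  j < size (s n) -> ocat x0 (size (cat_upto n) + j) = nth x0 (s n) j.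
Proof.
move=> ltj; rewrite (ocatE x0 (n := n.+1)); last by rewrite cat_uptoS size_cat ltn_add2l.
by rewrite cat_uptoS nth_cat ltnNge leq_addr /= addKn.
Qed.

Lemma ocat_head x0 i : i < size s0 -> ocat x0 i = nth x0 s0 i.
Proof.
have cat_upto0 : cat_upto 0 = s0 by rewrite /cat_upto /= cats0.
by rewrite -{1}cat_upto0 => /ocatE ->; rewrite cat_upto0.
Qed.

Lemma ocat_io (P : pred T) x0 :
  (forall k, has P (s k)) -> infinitely_often (fun i => P (ocat x0 i)).
Proof.
move=> hasP N; have /(has_nthP x0) [j ltj Pj] := hasP N.
exists (size (cat_upto N) + j); rewrite ocat_block //; split=> //.
exact: leq_trans (leq_trans (leq_addr _ _) (leq_size_cat_upto N)) (leq_addr _ _).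
Qed.

Lemma ocat_tail (P : pred T) x0 i :
  (forall k, all P (s k)) -> size s0 <= i -> P (ocat x0 i).
Proof.
move=> allP lei; rewrite /ocat /cat_upto nth_cat ltnNge lei /=.
have /all_nthP -> // : all P (flatten [seq s k | k <- iota 0 i.+1]).
  by elim: (iota 0 i.+1) => //= k l IH; rewrite all_cat allP.
by have := leq_size_cat_upto i.+1; rewrite size_cat; lia.
Qed.

End Words.

Lemma concat_omega_cat_upto (T : Type) (a : nat -> T) (u : seq T) (b : nat -> T) ws :
  (forall i, a i = if i < size u then nth (a 0) u i else b (i - size u)) ->
  (forall k j, j < size (ws k) -> b (\sum_(i < k) size (ws i) + j) = nth (b 0) (ws k) j) ->
  forall n i, i < size (cat_upto u ws n) -> a i = nth (a 0) (cat_upto u ws n) i.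
Proof.
move=> Ha Hb; elim=> [|n IH] i.
  by rewrite /cat_upto /= cats0 Ha => lti; rewrite lti; apply: set_nth_default.
rewrite cat_uptoS nth_cat size_cat; case: ifP => [ltin _ | /negbT]; first exact: IH.
rewrite -leqNgt size_cat_upto Ha => le_i lt_i.
rewrite ltnNge (leq_trans (leq_addr _ _) le_i) /=.
have -> : i - size u = \sum_(k < n) size (ws k) + (i - (size u + \sum_(k < n) size (ws k))).
  by lia.
by rewrite Hb; [apply: set_nth_default |]; lia.
Qed.

Lemma concat_omega_segments (T : Type) (U V : lang T) (a : nat -> T) (pos : nat -> nat) :
  (forall k, pos k < pos k.+1) ->
  U (segment a 0 (pos 0)) -> (forall k, V (segment a (pos k) (pos k.+1))) ->
  concat_omega U (omega_power V) a.
Proof.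
move=> lt_pos Uu Vw.
have le_pos k : pos 0 <= pos k.
  by elim: k => // k IH; apply: leq_trans IH (ltnW (lt_pos k)).
have sum_size k : \sum_(i < k) size (segment a (pos i) (pos i.+1)) = pos k - pos 0.
  rewrite (eq_bigr (fun i : 'I_k => pos i.+1 - pos i)) => [|i _]; last by rewrite size_segment.
  rewrite -(big_mkord xpredT (fun i => pos i.+1 - pos i)) telescope_sumn_in // => i _.
  exact: ltnW.
exists (segment a 0 (pos 0)) => //; exists (fun i => a (pos 0 + i)).
  exists (fun k => segment a (pos k) (pos k.+1)); split.
    move=> k; split=> //; move/(f_equal size); rewrite size_segment /=.
    by have := lt_pos k; lia.
  move=> k j; rewrite size_segment => ltj; rewrite sum_size nth_segment //.
  by congr a; have := le_pos k; lia.
move=> i; rewrite size_segment subn0; case: ifP => lti; first by rewrite nth_segment ?subn0.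
by congr a; move/negbT: lti; lia.
Qed.

Lemma bounded_witnesses (I : finType) (P : I -> nat -> Prop) :
  (forall i, exists n, P i n) -> exists M, forall i, exists2 n, n < M & P i n.
Proof.
move=> exP; suff [M HM] : exists M, forall i, i \in enum I -> exists2 n, n < M & P i n.
  by exists M => i; apply: HM; rewrite mem_enum.
elim: (enum I) => [|i s [M HM]]; first by exists 0.
have [n Pn] := exP i; exists (maxn M n.+1) => k; rewrite in_cons.
case/orP=> [/eqP -> | /HM [m ltmM Pm]]; first by exists n; rewrite // leq_max ltnSn orbT.
by exists m; rewrite // leq_max ltmM.
Qed.

Lemma pigeonhole_io (I : finType) (f : nat -> I) :
  exists i, infinitely_often (fun n => f n = i).
Proof.
apply: NNPP => nio.
have fin i : exists N, forall n, N <= n -> f n <> i.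
  apply: NNPP => nfin; apply: nio; exists i => N; apply: NNPP => nex; apply: nfin.
  by exists N => n leNn fni; apply: nex; exists n.
have [M HM] := bounded_witnesses fin; have [N ltNM HN] := HM (f M).
exact: (HN M (ltnW ltNM)).
Qed.

Lemma io_window (I : finType) (P : I -> nat -> Prop) (R : nat -> Prop) :
  (forall i, infinitely_often (P i)) -> infinitely_often R ->
  forall p, exists p', [/\ p < p', R p' & forall i, exists2 k, p <= k < p' & P i k].
Proof.
move=> ioP ioR p.
have [M HM] := bounded_witnesses (P := fun i k => p <= k /\ P i k) (fun i => ioP i p).
have [p' [lep' Rp']] := ioR (maxn M p.+1); rewrite geq_max in lep'.
case/andP: lep' => leMp' ltpp'; exists p'; split=> // i.
by have [k ltkM [lepk Pk]] := HM i; exists k; rewrite // lepk (leq_trans ltkM leMp').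
Qed.

Lemma iterate_windows (W : nat -> nat -> Prop) p0 :
  (forall p, exists p', p < p' /\ W p p') ->
  exists pos : nat -> nat, pos 0 = p0 /\ forall k, pos k < pos k.+1 /\ W (pos k) (pos k.+1).
Proof.
move=> next; pose nxt p := proj1_sig (constructive_indefinite_description _ (next p)).
have nxtP p : p < nxt p /\ W p (nxt p).
  exact: proj2_sig (constructive_indefinite_description _ (next p)).
by exists (fun k => iter k nxt p0); split=> // k; apply: nxtP.
Qed.

(** * Runs *)

Section Runs.

Variables (Q Sigma : Type) (d : nat) (Delta : seq (trans Q Sigma d)).

Definition orun_on (a : nat -> Sigma) (r : nat -> trans Q Sigma d) : Prop :=
  forall i, In (r i) Delta /\ tlab (r i) = a i /\ ttgt (r i) = tsrc (r i.+1).

Lemma fin_run_cat p w1 r1 p' w2 r2 p'' :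
  fin_run Delta p w1 r1 p' -> fin_run Delta p' w2 r2 p'' ->
  fin_run Delta p (w1 ++ w2) (r1 ++ r2) p''.
Proof.
elim: w1 p r1 => [|x w1 IH] p [|t r1] //= => [-> // | [? [? [? ?]]] ?].
by do 3 split => //; apply: IH.
Qed.

Lemma fin_run_nth p w r p' t0 x0 : fin_run Delta p w r p' ->
  size r = size w /\ forall i, i < size r ->
  [/\ In (nth t0 r i) Delta, tlab (nth t0 r i) = nth x0 w i &
      tsrc (nth t0 r i) = if i is k.+1 then ttgt (nth t0 r k) else p].
Proof.
elim: w p r => [|x w IH] p [|t r] //= [tD [ts [tx fr]]].
have [-> Hn] := IH _ _ fr; split=> // -[|i] //= ltir.
by have [? ? ->] := Hn i ltir; split=> //; case: (i) ltir.
Qed.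

Lemma fin_run_segment a r : orun_on a r -> forall m n, m <= n ->
  fin_run Delta (tsrc (r m)) (segment a m n) (segment r m n) (tsrc (r n)).
Proof.
move=> Hr m n /subnKC <-; rewrite /segment addKn; move: (n - m) => k.
elim: k m => [|k IH] m /=; first by rewrite addn0.
by have [rD [ra rr]] := Hr m; do 3 split => //; rewrite rr -addSnnS; apply: IH.
Qed.

Lemma fin_run_cat_upto q0 q u ru (ws : nat -> seq Sigma) rs :
  fin_run Delta q0 u ru q -> (forall k, fin_run Delta q (ws k) (rs k) q) ->
  forall n, fin_run Delta q0 (cat_upto u ws n) (cat_upto ru rs n) q.
Proof.
move=> fru frs; elim=> [|n IH]; first by rewrite /cat_upto /= !cats0.
by rewrite !cat_uptoS; apply: fin_run_cat IH (frs n).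
Qed.

Lemma orun_of_fin_runs q0 a r (w : nat -> seq Sigma) (rr : nat -> seq (trans Q Sigma d))
    (p : nat -> Q) t0 x0 :
  (forall n, fin_run Delta q0 (w n) (rr n) (p n)) ->
  (forall n i, i < size (rr n) -> r i = nth t0 (rr n) i /\ a i = nth x0 (w n) i) ->
  (forall i, exists n, i < size (rr n)) ->
  tsrc (r 0) = q0 /\ orun_on a r.
Proof.
move=> frun rrE long.
have step n i : i < size (rr n) -> [/\ In (r i) Delta, tlab (r i) = a i &
    tsrc (r i) = if i is k.+1 then ttgt (r k) else q0].
  move=> lti; have [-> ->] := rrE n i lti.
  have [rD ra ->] := (fin_run_nth t0 x0 (frun n)).2 i lti; split=> //.
  case: (i) lti => // k ltk.
  by rewrite (rrE n k (ltnW ltk)).1.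
split; first by have [n lt0] := long 0; have [] := step n 0 lt0.
move=> i; have [n lti1] := long i.+1.
by have [? ? _] := step n i (ltnW lti1); have [_ _ ->] := step n i.+1 lti1.
Qed.

Lemma orun_ocat q0 q a u ru b ws rs t0 :
  (forall i, a i = if i < size u then nth (a 0) u i else b (i - size u)) ->
  (forall k j, j < size (ws k) -> b (\sum_(i < k) size (ws i) + j) = nth (b 0) (ws k) j) ->
  fin_run Delta q0 u ru q -> (forall k, fin_run Delta q (ws k) (rs k) q) ->
  (forall k, 0 < size (rs k)) ->
  tsrc (ocat ru rs t0 0) = q0 /\ orun_on a (ocat ru rs t0).
Proof.
move=> Ha Hb fru frs rs_gt0; have frR := fin_run_cat_upto fru frs.
apply: (orun_of_fin_runs frR (t0 := t0) (x0 := a 0)) => [n i lti | i].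
  split; first exact: ocatE.
  by apply: (concat_omega_cat_upto Ha Hb); rewrite -(fin_run_nth t0 (a 0) (frR n)).1.
by exists i.+1; apply: leq_trans (leq_addr _ _) (leq_size_cat_upto ru rs_gt0 i.+1).
Qed.

Definition sumvec (rr : seq (trans Q Sigma d)) : nvec d := fun j => \sum_(t <- rr) tvec t j.

End Runs.

Definition inf_coords d (v : evec d) : {set 'I_d} := [set j | isInf (v j)].

Lemma sum_eventually0 (f : nat -> nat) N M :
  (forall i, N <= i -> f i = 0) -> N <= M -> \sum_(i < M) f i = \sum_(i < N) f i.
Proof.
move=> f0; elim: M => [|M IH]; first by rewrite leqn0 => /eqP ->.
by rewrite leq_eqVlt => /orP [/eqP -> // | ltNM]; rewrite big_ord_recr /= f0 // addn0 IH.
Qed.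

Section Rho.

Variables (Q Sigma : Type) (d : nat) (r : nat -> trans Q Sigma d).

Lemma rho_is_io v j : rho_is r v -> j \in inf_coords v ->
  infinitely_often (fun i => tvec (r i) j <> 0).
Proof.
move=> Hrho; rewrite inE => vj; apply: NNPP => nio.
by have [_ /(_ nio) [N [_ vjE]]] := Hrho j; rewrite vjE in vj.
Qed.

Lemma rho_is_eventually v : rho_is r v -> exists M,
  (forall i j, M <= i -> j \notin inf_coords v -> tvec (r i) j = 0) /\
  forall N, M <= N -> v = ext (inf_coords v) (sumvec (segment r 0 N)).
Proof.
move=> Hrho.
have fin j : exists N, j \notin inf_coords v ->
    (forall i, N <= i -> tvec (r i) j = 0) /\ v j = Fin (\sum_(i < N) tvec (r i) j).
  case: (boolP (j \in inf_coords v)) => [jJ | ]; first by exists 0 => /negP.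
  rewrite inE => vj; have [ioInf finSum] := Hrho j.
  by have [|N HN] := finSum; [move/ioInf => vjE; rewrite vjE in vj | exists N].
have [M HM] := bounded_witnesses fin.
exists M; split=> [i j leMi jJ | N leMN].
  by have [N ltNM /(_ jJ) [HN _]] := HM j; apply: HN; apply: leq_trans (ltnW ltNM) leMi.
apply: functional_extensionality => j; rewrite /ext /sumvec.
case: ifP => [| /negbT jJ]; first by rewrite inE; case: (v j).
have [N' ltN'M /(_ jJ) [HN' ->]] := HM j.
rewrite /segment big_map -/(index_iota 0 N) big_mkord; congr Fin; apply/esym.
by apply: sum_eventually0 HN' _; apply: leq_trans (ltnW ltN'M) leMN.
Qed.

Lemma rho_is_ext (J : {set 'I_d}) N :
  (forall j, j \in J -> infinitely_often (fun i => tvec (r i) j <> 0)) ->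
  (forall i j, N <= i -> j \notin J -> tvec (r i) j = 0) ->
  rho_is r (ext J (fun j => \sum_(i < N) tvec (r i) j)).
Proof.
move=> ioJ zero j; rewrite /ext; case: ifP => [/ioJ io | /negbT jJ]; split=> // [io|_].
- by have [i [leNi]] := io N; rewrite zero.
- by exists N; split=> // i leNi; apply: zero.
Qed.

End Rho.

(** * Prefix and loop languages *)

Section Languages.

Variables (Q Sigma : finType) (d : nat) (Delta : seq (trans Q Sigma d)) (F : pred Q).
Implicit Types (J : {set 'I_d}) (rr : seq (trans Q Sigma d)).

Definition supp rr : {set 'I_d} := [set j | has (fun t => tvec t j != 0) rr].

Definition vanishes_off J (t : trans Q Sigma d) : bool :=
  [forall j, (j \notin J) ==> (tvec t j == 0)].

Definition visits_F rr : bool := has (fun t => ttgt t \in F) rr.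

Definition prefix_lang (q0 : Q) (C : evec d -> Prop) (q : Q) J : lang Sigma :=
  fun u => exists rr, fin_run Delta q0 u rr q /\ C (ext J (sumvec rr)).

Definition loop_run (q : Q) J (w : seq Sigma) rr : Prop :=
  fin_run Delta q w rr q /\ [/\ all (vanishes_off J) rr, visits_F rr & J \subset supp rr].

Definition loop_lang (q : Q) J : lang Sigma := fun w => exists rr, loop_run q J w rr.

Lemma prefix_lang_parikh q0 C q J :
  semilinear_ext C -> parikh_recognizable (prefix_lang q0 C q J).
Proof.
move=> slC; exists Q, d, q0, Delta, (pred1 q), (fun x => C (ext J x)).
split; first exact: semilinear_ext_proj.
move=> u; split=> [[rr [fr Crr]] | [rr [p [fr [/eqP pq Crr]]]]]; last by exists rr; rewrite -pq.
by exists rr, q; rewrite inE eqxx.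
Qed.

(* A state (p, s, b) records the current state of the run, its support so far,
   and whether it has visited F. *)
Definition loop_step J (st : Q * {set 'I_d} * bool) (x : Sigma) (st' : Q * {set 'I_d} * bool) :=
  let: (p, s, b) := st in let: (p', s', b') := st' in
  has (fun t => [&& tsrc t == p, tlab t == x, ttgt t == p', vanishes_off J t,
                 s' == s :|: [set j | tvec t j != 0] & b' == b || (ttgt t \in F)]) Delta.

Definition loop_final (q : Q) J (st : Q * {set 'I_d} * bool) : bool :=
  let: (p, s, b) := st in [&& p == q, J \subset s & b].

Lemma nfa_run_loop q J w p s b :
  nfa_run (loop_step J) (p, s, b) w (loop_final q J) <->
  exists rr, fin_run Delta p w rr q /\
    [/\ all (vanishes_off J) rr, b || visits_F rr & J \subset s :|: supp rr].
Proof.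
have supp0 : supp [::] = set0 by apply/setP => j; rewrite !inE.
elim: w p s b => [|x w IH] p s b /=.
  split=> [/and3P [/eqP -> Js ->] | [[|t rr] [//= -> [_ b_ Js]]]].
    by exists [::]; rewrite supp0 setU0.
  by move: b_ Js; rewrite supp0 setU0 orbF eqxx => -> ->.
split.
- case=> [[[p' s'] b']] [/hasP [t tD]].
  case/and5P=> /eqP ts /eqP tx /eqP tp vt /andP [/eqP -> /eqP ->].
  case/IH=> rr [fr [vrr Frr Jrr]]; exists (t :: rr); split=> /=.
    by rewrite tp; split=> //; apply/In_mem.
  split; [by rewrite vt | by rewrite orbA |].
  by apply: (subset_trans Jrr); apply/subsetP => j; rewrite !inE !orbA.
- case=> [[|t rr] [//= [tD [ts [tx fr]]] [/andP [vt vrr] Frr Jrr]]].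
  exists (ttgt t, s :|: [set j | tvec t j != 0], b || (ttgt t \in F)); split.
    by apply/hasP; exists t; [apply/In_mem | rewrite ts tx vt !eqxx].
  apply/IH; exists rr; split=> //; split=> //; first by rewrite -orbA.
  by apply: (subset_trans Jrr); apply/subsetP => j; rewrite !inE !orbA.
Qed.

Lemma loop_lang_regular q J : regular (loop_lang q J).
Proof.
exists (Q * {set 'I_d} * bool)%type, (q, set0, false), (loop_step J), (loop_final q J).
move=> w; rewrite nfa_run_loop.
by split=> -[rr [fr [vrr Frr Jrr]]]; exists rr; rewrite set0U in Jrr *.
Qed.

End Languages.

(** * Decomposing accepting runs *)

Section Decomposition.

Variables (Q Sigma : finType) (d : nat) (q0 : Q) (Delta : seq (trans Q Sigma d)).
Variables (F : pred Q) (C : evec d -> Prop).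

Lemma LPBA_accepts_decompose a : LPBA_accepts q0 Delta F C a ->
  exists q J, concat_omega (prefix_lang Delta q0 C q J) (omega_power (loop_lang Delta F q J)) a.
Proof.
case=> r [r0 [Hr [ioF [v [Hrho Cv]]]]].
have [M [zeroM vE]] := rho_is_eventually Hrho; set J := inf_coords v in zeroM vE.
have [q ioq] := pigeonhole_io (fun i => tsrc (r i)).
have [p0 [leMp0 p0q]] := ioq M.
pose P (o : option 'I_d) k :=
  if o is Some j then j \in J -> tvec (r k) j <> 0 else ttgt (r k) \in F.
have ioP o : infinitely_often (P o).
  case: o => [j|] N /=; last exact: ioF N.
  case: (boolP (j \in J)) => [/(rho_is_io Hrho) io | /negP jJ]; last by exists N.
  by have [i [leNi nz]] := io N; exists i.
pose W p p' :=
  [/\ tsrc (r p') = q, visits_F F (segment r p p') & J \subset supp (segment r p p')].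
have windows p : exists p', p < p' /\ W p p'.
  have [p' [ltpp' p'q Pk]] := io_window ioP ioq p; exists p'; split=> //; split=> //.
    by have [k lek Fk] := Pk None; apply: (has_segment (f := r) lek).
  apply/subsetP => j jJ; rewrite inE; have [k lek nzk] := Pk (Some j).
  by apply: (has_segment (f := r) lek); apply/eqP; apply: nzk.
have [pos [pos0 Hpos]] := iterate_windows p0 windows.
have le_pos k : p0 <= pos k.
  by elim: k => [|k IH]; [rewrite pos0 | apply: leq_trans IH (ltnW (Hpos k).1)].
have posq k : tsrc (r (pos k)) = q.
  by case: k => [|k]; [rewrite pos0 | have [_ []] := Hpos k].
exists q, J; apply: (concat_omega_segments (pos := pos)) => [k | | k].
- by have [] := Hpos k.
- exists (segment r 0 (pos 0)); rewrite pos0 -(vE _ leMp0); split=> //.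
  by rewrite -r0 -p0q; apply: fin_run_segment.
- exists (segment r (pos k) (pos k.+1)); have [ltk [_ Fk Jk]] := Hpos k.
  split; first by rewrite -{1}(posq k) -(posq k.+1); apply: fin_run_segment (ltnW ltk).
  split=> //; apply/allP => t /mapP [i]; rewrite mem_iota => /andP [lei _] ->.
  apply/forallP => j; apply/implyP => jJ; apply/eqP; apply: zeroM jJ.
  exact: leq_trans leMp0 (leq_trans (le_pos k) lei).
Qed.

Lemma concat_omega_accepted q J a :
  concat_omega (prefix_lang Delta q0 C q J) (omega_power (loop_lang Delta F q J)) a ->
  LPBA_accepts q0 Delta F C a.
Proof.
case=> u [ru [fru Cu]] [b [ws [Hws Hb]] Ha].
have [rs Hrs] : exists rs, forall k, loop_run Delta F q J (ws k) (rs k).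
  exists (fun k => sval (constructive_indefinite_description _ (Hws k).1)) => k.
  exact: svalP.
pose t0 : trans Q Sigma d := (q0, a 0, [ffun => 0], q0).
have rs_gt0 k : 0 < size (rs k).
  rewrite (fin_run_nth t0 (a 0) (Hrs k).1).1 lt0n size_eq0; apply/eqP; exact: (Hws k).2.
pose r := ocat ru rs t0.
have [r0 Hr] := orun_ocat t0 Ha Hb fru (fun k => (Hrs k).1) rs_gt0.
have zero i j : size ru <= i -> j \notin J -> tvec (r i) j = 0.
  have vanish k : all (vanishes_off J) (rs k) by case: (Hrs k) => _ [].
  move=> lei jJ; have := ocat_tail rs_gt0 t0 vanish lei.
  by move/forallP/(_ j)/implyP/(_ jJ)/eqP.
exists r; split=> //; split=> //; split.
  by apply: (ocat_io ru rs_gt0 (P := fun t => ttgt t \in F)) => k; case: (Hrs k) => _ [].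
exists (ext J (sumvec ru)); split=> //.
have -> : sumvec ru = fun j => \sum_(i < size ru) tvec (r i) j.
  apply: functional_extensionality => j; rewrite /sumvec (big_nth t0) big_mkord.
  by apply: eq_bigr => i _; rewrite /r (ocat_head rs_gt0).
apply: rho_is_ext zero => j jJ N.
have ioj : infinitely_often (fun i => tvec (r i) j != 0).
  apply: (ocat_io ru rs_gt0 (P := fun t => tvec t j != 0)) => k.
  by case: (Hrs k) => _ [_ _ /subsetP /(_ j jJ)]; rewrite inE.
by have [i [leNi /eqP nz]] := ioj N; exists i.
Qed.

End Decomposition.

Theorem lemma7 (Sigma : finType) (L : olang Sigma) :
  LPBA_recognizable L ->
  exists (n : nat) (U V : 'I_n -> lang Sigma),
    (forall i, parikh_recognizable (U i)) /\
    (forall i, regular (V i)) /\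
    (forall a, L a <-> exists i, concat_omega (U i) (omega_power (V i)) a).
Proof.
case=> Q [d [q0 [Delta [F [C [slC HL]]]]]].
exists #|{: Q * {set 'I_d}}|.
exists (fun i => prefix_lang Delta q0 C (enum_val i).1 (enum_val i).2).
exists (fun i => loop_lang Delta F (enum_val i).1 (enum_val i).2).
split; first by move=> i; apply: prefix_lang_parikh.
split; first by move=> i; apply: loop_lang_regular.
move=> a; rewrite HL; split=> [/LPBA_accepts_decompose [q [J H]] | [i /concat_omega_accepted //]].
by exists (enum_rank (q, J)); rewrite enum_rankK.
Qed.
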